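(* Let $V$ be a finite dimensional vector space over a field $\mathbb{K}$ of characteristic zero, and let $u,v\in\widehat L(V)$ satisfy $|\exp(u)|=|\exp(v)|\in|\widehat T(V)|$. Then $|u^m|=|v^m|\in|\widehat T(V)|$ for all $m\ge0$.
   Context: $\widehat T(V)=\prod_{m\ge0}V^{\otimes m}$ is the completed tensor algebra and $\widehat L(V)\subset\widehat T(V)$ the completed free Lie algebra on $V$ (the primitive elements). $|\widehat T(V)|$ is the quotient of $\widehat T(V)$ by the closure of the span of commutators $ab-ba$, with projection $x\mapsto|x|$. *)

(* Model: V = K^n with basis e_0..e_{n-1} (indices 'I_n).
   Words = seq 'I_n; the completed tensor algebra \hat T(V) = prod_m V^{(x)m}
   is identified with formal noncommutative power series seq 'I_n -> K,
   the coefficient of the word i1..im being the coordinate in V^{(x)m}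
   on e_{i1} (x) ... (x) e_{im}. *)
From mathcomp Require Import all_boot all_order all_algebra.
Set Implicit Arguments. Unset Strict Implicit. Unset Printing Implicit Defensive.
Import Order.TTheory GRing.Theory Num.Theory.
Local Open Scope ring_scope.

Section Series.
Variables (K : fieldType) (n : nat).

Definition word := seq 'I_n.
Definition ser := word -> K.

Definition ser_one : ser := fun w => if w == [::] then 1 else 0.
Definition ser_add (a b : ser) : ser := fun w => a w + b w.
Definition ser_sub (a b : ser) : ser := fun w => a w - b w.
Definition ser_mul (a b : ser) : ser :=
  fun w => \sum_(i < (size w).+1) a (take i w) * b (drop i w).
Fixpoint ser_pow (a : ser) (m : nat) : ser :=
  if m is m'.+1 then ser_mul a (ser_pow a m') else ser_one.
(* exp(u) = sum_k u^k / k!  (for u with zero constant term, only the terms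
   k <= |w| contribute to the coefficient of the word w) *)
Definition ser_exp (u : ser) : ser :=
  fun w => \sum_(k < (size w).+1) (k`!%:R)^-1 * ser_pow u k w.

Fixpoint shuffle_count (u v w : word) : nat :=
  match w with
  | [::] => ((u == [::]) && (v == [::]))%N
  | c :: w' =>
      ((if u is a :: u' then ((a == c) * shuffle_count u' v w')%N else 0%N)
     + (if v is b :: v' then ((b == c) * shuffle_count u v' w')%N else 0%N))%N
  end.

(* shuffle coproduct Delta : \hat T(V) -> \hat T(V) \hat(x) \hat T(V),
   an element of the completed tensor product being given by its
   coefficients on pairs of words *)
Definition coprod (x : ser) (u v : word) : K :=
  \sum_(t : (size u + size v).-tuple 'I_n) x (val t) * (shuffle_count u v (val t))%:R.

(* \hat L(V): the primitive elements, Delta x = x (x) 1 + 1 (x) x *)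
Definition primitive (x : ser) : Prop :=
  forall u v : word,
    coprod x u v = (if v == [::] then x u else 0) + (if u == [::] then x v else 0).

Definition comm_span (z : ser) : Prop :=
  exists s : seq (ser * ser),
    z = (fun w => \sum_(p <- s) (ser_mul p.1 p.2 w - ser_mul p.2 p.1 w)).

(* closure in the (degree-filtration / product) topology of \hat T(V) *)
Definition in_closure (P : ser -> Prop) (z : ser) : Prop :=
  forall N : nat, exists s : ser, P s /\ forall w : word, (size w < N)%N -> z w = s w.

Definition cyc_eq (x y : ser) : Prop := in_closure comm_span (ser_sub x y).

End Series.

(* For a primitive u, the coproduct of u^j is the binomial sum of the u^l (x) u^(j-l), so
   the Adams operation Psi^k = mu^(k) o Delta^(k) acts on u^j by k^j, and
   Psi^k (exp u) = sum_j k^j u^j / j!.  On a word, Psi^k sums the concatenations of the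
   k pieces of its deshuffles; it maps the difference of a word and its rotation to a
   sum of such differences and only reads coefficients of words of the same length, so
   it preserves the closure of the commutator span.  Hence |exp u| = |exp v| gives
   |sum_j k^j (u^j - v^j) / j!| = 0 for every k, and since the Vandermonde matrix
   (k^j)_(k, j < N) is invertible in characteristic zero, a combination of the Psi^k
   isolates u^m - v^m on all words of length < N. *)

From mathcomp Require Import all_boot all_order all_algebra.
From Stdlib Require Import FunctionalExtensionality.
From mathcomp Require Import zify ring.
Set Implicit Arguments. Unset Strict Implicit. Unset Printing Implicit Defensive.
Import Order.TTheory GRing.Theory Num.Theory.
Local Open Scope ring_scope.

(** * Words of a given length *)

Section Words.
Variable n : nat.

Fixpoint words (L : nat) : seq (seq 'I_n) :=
  if L is L'.+1 then [seq c :: x | c <- enum 'I_n, x <- words L'] else [:: [::]].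

Definition words_below N : seq (seq 'I_n) := flatten [seq words L | L <- iota 0 N].

Lemma mem_words L x : (x \in words L) = (size x == L).
Proof.
elim: L x => [|L IH] x; first by rewrite inE size_eq0.
apply/allpairsP/idP => [[[c y] /= [_ + ->]]|]; first by rewrite IH.
by case: x => // c x sx; exists (c, x); rewrite mem_enum IH.
Qed.

Lemma words_uniq L : uniq (words L).
Proof.
elim: L => [|L IH] //=; apply: allpairs_uniq => //; first exact: enum_uniq.
by move=> [c x] [d y] _ _ [-> ->].
Qed.

Lemma words_add m k : words (m + k) = [seq x ++ y | x <- words m, y <- words k].
Proof.
elim: m => [|m IH] /=; first by rewrite cats0 map_id.
rewrite IH; elim: (enum 'I_n) => [|c cs IHc] //=.
by rewrite !allpairs_cat IHc allpairs_mapl map_allpairs.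
Qed.

Lemma perm_words_tuples L : perm_eq (words L) [seq val t | t <- enum {: L.-tuple 'I_n}].
Proof.
apply: uniq_perm; first exact: words_uniq.
  by rewrite map_inj_uniq ?enum_uniq //; exact: val_inj.
move=> x; rewrite mem_words; apply/eqP/mapP => [sx|[t _ ->]]; last exact: size_tuple.
by exists (Tuple (introT eqP sx)); rewrite ?mem_enum.
Qed.

End Words.

Section WordSums.
Variable n : nat.
Local Notation word := (seq 'I_n).

Lemma sum_tuples_words (V : nmodType) L (F : word -> V) :
  \sum_(t : L.-tuple 'I_n) F t = \sum_(x <- words n L) F x.
Proof. by rewrite (perm_big _ (perm_words_tuples n L)) big_map big_enum. Qed.

Lemma sum_words_add (V : nmodType) m k (F : word -> word -> V) :
  \sum_(z <- words n (m + k)) F (take m z) (drop m z) =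
  \sum_(x <- words n m) \sum_(y <- words n k) F x y.
Proof.
rewrite words_add big_allpairs_dep; apply: eq_big_seq => x; rewrite mem_words => /eqP sx.
by apply: eq_bigr => y _; rewrite -sx take_size_cat ?drop_size_cat.
Qed.

Lemma sum_words_split (V : nmodType) L m (F : word -> word -> V) : (m <= L)%N ->
  \sum_(z <- words n L) F (take m z) (drop m z) =
  \sum_(x <- words n m) \sum_(y <- words n (L - m)) F x y.
Proof. by move=> mL; rewrite -sum_words_add subnKC. Qed.

Lemma sum_words_pred1 (V : nmodType) L (F : word -> V) v :
  \sum_(x <- words n L | x == v) F x = if size v == L then F v else 0.
Proof.
rewrite -mem_words; case: ifP => [vL|/negbT vL].
  rewrite (big_rem v vL) eqxx /= big_seq_cond big1 ?addr0 // => x /andP[].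
  by rewrite (mem_rem_uniq _ (words_uniq n L)) => /andP[/negbTE ->].
by rewrite big_seq_cond big1 // => x /andP[xL /eqP xv]; rewrite -xv xL in vL.
Qed.

Lemma sum_words_delta (R : pzSemiRingType) L (F : word -> R) v :
  \sum_(x <- words n L) F x * (x == v)%:R = if size v == L then F v else 0.
Proof.
rewrite -sum_words_pred1 [RHS]big_mkcond; apply: eq_bigr => x _.
by case: (x == v); rewrite ?mulr1 ?mulr0.
Qed.

Lemma sum_words_below_delta (R : pzSemiRingType) N (F : word -> R) v :
  (size v < N)%N -> \sum_(x <- words_below n N) F x * (x == v)%:R = F v.
Proof.
move=> vN; rewrite big_flatten big_map (_ : iota 0 N = index_iota 0 N); last first.
  by rewrite /index_iota subn0.
under eq_bigr do rewrite sum_words_delta eq_sym.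
by rewrite -big_mkcond big_nat1_eq vN andbT.
Qed.

End WordSums.

(** * Shuffles and splittings *)

Lemma eq_cat_sum (T : eqType) (m t w : seq T) :
  (m ++ t == w) = (\sum_(i < (size w).+1) (m == take i w) * (t == drop i w))%N :> nat.
Proof.
have take_eq (i : 'I_(size w).+1) : m == take i w -> i = size m :> nat.
  by move=> /eqP ->; rewrite size_takel ?leq_ord.
case: (leqP (size m) (size w)) => [mw|wm].
  rewrite (bigD1 (Ordinal (mw : (size m < (size w).+1)%N))) //= big1 ?addn0 => [|i ne].
    rewrite mulnb; congr nat_of_bool.
    apply/eqP/andP => [<-|[/eqP mE /eqP ->]]; last by rewrite {1}mE cat_take_drop.
    by rewrite take_size_cat // drop_size_cat.
  by case: eqP => // /eqP /take_eq hi; move: ne; rewrite -val_eqE /= hi eqxx.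
rewrite big1 => [|i _]; last first.
  by case: eqP => // /eqP /take_eq hi; have := leq_ord i; rewrite hi leqNgt wm.
by case: eqP => // mtw; move: wm; rewrite -mtw size_cat; lia.
Qed.

Lemma count_mem_cat_prefix (T : eqType) (m w : seq T) s :
  count_mem w [seq m ++ t | t <- s] =
  (\sum_(i < (size w).+1) (m == take i w) * count_mem (drop i w) s)%N.
Proof.
elim: s => [|t s IH] /=; first by rewrite big1 // => i _; rewrite muln0.
by rewrite IH eq_cat_sum -big_split; apply: eq_bigr => i _; rewrite mulnDr.
Qed.

Lemma count_mem_sub_map (R : pzRingType) (T : eqType) (f : T -> T) (s : seq T) w :
  (count_mem w s)%:R - (count_mem w (map f s))%:R =
  \sum_(q <- s) ((w == q)%:R - (w == f q)%:R) :> R.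
Proof.
elim: s => [|q s IH] /=; first by rewrite big_nil subrr.
by rewrite big_cons -IH !natrD [q == w]eq_sym [f q == w]eq_sym addrACA opprD.
Qed.

Lemma perm_allpairs_eq_in (S T : eqType) (s : seq S) (t u : S -> seq T) (f g : S -> T -> T) :
  {in s, forall b, map (f b) (t b) = map (g b) (u b)} ->
  perm_eq [seq f b x | b <- s, x <- t b] [seq g b x | b <- s, x <- u b].
Proof.
move=> h; suff -> : [seq f b x | b <- s, x <- t b] = [seq g b x | b <- s, x <- u b] by [].
by congr flatten; apply/eq_in_map.
Qed.

Fixpoint bitmasks (m : nat) : seq bitseq :=
  if m is m'.+1 then map (cons true) (bitmasks m') ++ map (cons false) (bitmasks m')
  else [:: [::]].

Lemma size_bitmasks m b : b \in bitmasks m -> size b = m.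
Proof.
elim: m b => [|m IH] b /=; first by rewrite inE => /eqP ->.
by rewrite mem_cat => /orP [] /mapP [b' /IH <- ->].
Qed.

Lemma perm_bitmasks_rcons m : perm_eq (bitmasks m.+1)
  ([seq rcons b true | b <- bitmasks m] ++ [seq rcons b false | b <- bitmasks m]).
Proof.
elim: m => [|m IH] //; rewrite [bitmasks m.+2]/=.
apply: perm_trans (perm_cat (perm_map (cons true) IH) (perm_map (cons false) IH)) _.
by rewrite [bitmasks m.+1]/= !map_cat -!map_comp -!catA perm_cat2l perm_catCA.
Qed.

Section Shuffles.
Variable n : nat.
Local Notation word := (word n).
Local Notation sh := (@shuffle_count n).

Lemma shuffle_count_size p a x : sh p a x != 0%N -> size x = (size p + size a)%N.
Proof.
elim: x p a => [|c x IH] p a /=; first by case: p; case: a.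
case: p => [|d p]; case: a => [|e a] //=; rewrite ?add0n ?addn0.
- by case: (e == c) => //=; rewrite mul1n => /IH /= ->.
- by case: (d == c) => //=; rewrite mul1n => /IH /= ->; rewrite addn0.
rewrite addn_eq0 negb_and; case/orP.
  by case: (d == c) => //=; rewrite mul1n => /IH /= ->.
by case: (e == c) => //=; rewrite mul1n => /IH /= ->; rewrite addnS.
Qed.

Lemma shuffle_count_nil_l a x : sh [::] a x = (a == x).
Proof.
elim: x a => [|c x IH] [|e a] //=.
by rewrite IH eqseq_cons add0n; case: (e == c); case: (a == x).
Qed.

Lemma take_bump0_eq_nil (p : word) (i : 'I_(size p)) : (take (bump 0 i) p == [::]) = false.
Proof. by case: p i => [|d p] [i hi]. Qed.

Lemma shuffle_count_cat p a x1 x2 :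
  sh p a (x1 ++ x2) =
  (\sum_(i < (size p).+1) \sum_(j < (size a).+1)
     sh (take i p) (take j a) x1 * sh (drop i p) (drop j a) x2)%N.
Proof.
elim: x1 p a => [|c x1 IH] p a /=.
  rewrite big_ord_recl big_ord_recl /= !take0 !drop0 /= mul1n.
  rewrite big1 ?addn0; last by move=> j _; rewrite take_bump0_eq_nil.
  rewrite big1 ?addn0 // => i _; apply: big1 => j _.
  by rewrite take_bump0_eq_nil.
under eq_bigr do under eq_bigr do rewrite mulnDl.
under eq_bigr do rewrite big_split /=.
rewrite big_split /=; congr (_ + _)%N.
  case: p => [|d p] /=; first by rewrite big1 // => i _; rewrite big1.
  rewrite big_ord_recl /= big1 ?add0n // IH big_distrr /=; apply: eq_bigr => i _.
  by rewrite big_distrr /=; apply: eq_bigr => j _; rewrite mulnA.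
case: a => [|e a] /=; first by rewrite big1 // => i _; rewrite big1.
rewrite IH big_distrr /=; apply: eq_bigr => i _.
rewrite [RHS]big_ord_recl /= mul0n add0n big_distrr /=.
by apply: eq_bigr => j _; rewrite mulnA.
Qed.

(* [splittings k x] is the image of the word x under mu^(k) o Delta^(k): for each way of
   distributing the letters of x over k subwords, their concatenation in order. *)
Fixpoint splittings (k : nat) (x : word) : seq word :=
  if k is k'.+1 then
    [seq mask b x ++ t | b <- bitmasks (size x), t <- splittings k' (mask (map negb b) x)]
  else if x is [::] then [:: [::]] else [::].

Lemma size_splittings k x t : t \in splittings k x -> size t = size x.
Proof.
elim: k x t => [|k IH] x t /=; first by case: x => [|c x] //; rewrite inE => /eqP ->.
case/allpairsPdep => b [t' [hb ht' ->]].
rewrite size_cat (IH _ _ ht') !size_mask ?size_map ?(size_bitmasks hb) //.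
by rewrite count_map -(size_bitmasks hb) -(count_predC id b); congr (_ + _)%N; apply: eq_count.
Qed.

Definition adams_coef k (x w : word) : nat := count_mem w (splittings k x).

Lemma adams_coef_eq0 k x w : size x != size w -> adams_coef k x w = 0%N.
Proof.
by move=> h; apply/count_memPn; apply: contra h => /size_splittings ->.
Qed.

Lemma sum_bitmasks_shuffle (R : pzSemiRingType) (x p : word) (G : word -> R) :
  \sum_(b <- bitmasks (size x)) (mask b x == p)%:R * G (mask (map negb b) x) =
  \sum_(a <- words n (size x - size p)) (sh p a x)%:R * G a.
Proof.
elim: x p G => [|c x IH] p G.
  by rewrite /= !big_seq1 /=; case: p => [|d p] /=; rewrite ?eqxx.
rewrite [size _]/= [bitmasks _]/= big_cat !big_map /= (IH p (fun a => G (c :: a))).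
have sum_cons M q (H : word -> R) :
    \sum_(a <- words n M.+1) ((if a is e :: a' then (e == c) * sh q a' x else 0)%N)%:R * H a =
    \sum_(a <- words n M) (sh q a x)%:R * H (c :: a).
  rewrite big_allpairs_dep /= (bigD1_seq c) ?mem_enum ?enum_uniq //=.
  rewrite [X in _ + X]big1_seq ?addr0 => [|e /andP[ec _]].
    by apply: eq_bigr => a _; rewrite eqxx mul1n.
  by rewrite big1 // => a _; rewrite (negbTE ec) mul0n mul0r.
case: p => [|d p].
  rewrite big1 ?add0r; last by move=> b _; rewrite mul0r.
  rewrite [size [::]]/= subn0 -sum_cons; apply: eq_bigr => a _.
  by rewrite add0n.
under [RHS]eq_bigr do rewrite natrD natrM mulrDl -mulrA.
rewrite big_split /= -mulr_sumr -IH mulr_sumr [size _]/= subSS; congr (_ + _).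
  by apply: eq_bigr => b _; rewrite eqseq_cons -mulnb natrM -mulrA eq_sym.
case E: (size x - size p)%N => [|M]; last by rewrite -sum_cons subnS E.
rewrite subnS E /= !big_seq1 /= mul0r; case: (sh (d :: p) [::] x =P 0%N) => [->|/eqP].
  by rewrite mul0r.
by move/shuffle_count_size; rewrite addn0 /=; lia.
Qed.

Lemma adams_coefS (R : pzSemiRingType) k x w :
  (adams_coef k.+1 x w)%:R = \sum_(i < (size w).+1) \sum_(a <- words n (size x - i))
     (sh (take i w) a x)%:R * (adams_coef k a (drop i w))%:R :> R.
Proof.
rewrite /adams_coef /= count_flatten sumnE big_map natr_sum big_map.
under eq_bigr => b _ do rewrite count_mem_cat_prefix natr_sum.
rewrite exchange_big; apply: eq_bigr => i _ /=.
under eq_bigr do rewrite natrM.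
rewrite (sum_bitmasks_shuffle _ _ (fun a => (count_mem (drop i w) (splittings k a))%:R)).
by rewrite size_takel ?leq_ord.
Qed.

Definition splittings_lead k (c : 'I_n) (y : word) : seq word :=
  [seq c :: (mask b y ++ t) | b <- bitmasks (size y), t <- splittings k (mask (map negb b) y)].

Fixpoint splittings_mid k (c : 'I_n) (y : word) : seq word :=
  if k is k'.+1 then
    [seq (mask b y ++ [:: c]) ++ t | b <- bitmasks (size y), t <- splittings k (mask (map negb b) y)] ++
    [seq mask b y ++ t | b <- bitmasks (size y), t <- splittings_mid k' c (mask (map negb b) y)]
  else [::].

Lemma splittings_cons k (c : 'I_n) (y : word) : splittings k.+1 (c :: y) =
  splittings_lead k c y ++
  [seq mask b y ++ t | b <- bitmasks (size y), t <- splittings k (c :: mask (map negb b) y)].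
Proof. by rewrite /= allpairs_cat !allpairs_mapl. Qed.

Lemma perm_splittings_rcons k (c : 'I_n) (y : word) : perm_eq (splittings k.+1 (rcons y c))
  ([seq (mask b y ++ [:: c]) ++ t | b <- bitmasks (size y), t <- splittings k (mask (map negb b) y)] ++
   [seq mask b y ++ t | b <- bitmasks (size y), t <- splittings k (rcons (mask (map negb b) y) c)]).
Proof.
rewrite /= size_rcons.
apply: perm_trans (perm_allpairs_dep _ (perm_bitmasks_rcons (size y)) (fun b _ => perm_refl _)) _.
rewrite allpairs_cat !allpairs_mapl.
by apply: perm_cat; apply: perm_allpairs_eq_in => b hb;
  rewrite map_rcons !mask_rcons ?size_map ?(size_bitmasks hb) ?cats0 ?cats1.
Qed.

Lemma splittings0_nil (z t : word) : t \in splittings 0 z -> t = [::].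
Proof. by case: z => [|c z] //=; rewrite inE => /eqP. Qed.

(* A splitting of c :: y either starts with c ([splittings_lead]), and then its rotation
   is a splitting of rcons y c ending with c, or it does not, and then it is also a
   splitting of rcons y c ([splittings_mid]). *)
Lemma perm_splittings_cons_rcons k c y :
  perm_eq (splittings k.+1 (c :: y)) (splittings_lead k c y ++ splittings_mid k c y) /\
  perm_eq (splittings k.+1 (rcons y c))
          (map (rot 1) (splittings_lead k c y) ++ splittings_mid k c y).
Proof.
elim: k y => [|k IH] y.
  split; first by rewrite splittings_cons perm_cat2l; elim: (bitmasks (size y)).
  apply: perm_trans (perm_splittings_rcons 0 c y) _.
  rewrite [splittings_mid 0 c y]/= cats0.
  rewrite (eq_allpairsr _ _ (t1 := fun b => splittings 0 (rcons (mask (map negb b) y) c))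
      (t2 := fun _ => [::])); last by move=> b; case: (mask _ _).
  rewrite allpairs0r cats0 /splittings_lead map_allpairs.
  apply: perm_allpairs_eq_in => b _; apply/eq_in_map => t /splittings0_nil ->.
  by rewrite rot1_cons !cats0 cats1.
have lead_mid : [seq mask b y ++ t | b <- bitmasks (size y),
                    t <- splittings_lead k c (mask (map negb b) y)] =
  [seq (mask b y ++ [:: c]) ++ t | b <- bitmasks (size y),
                    t <- splittings k.+1 (mask (map negb b) y)].
  congr flatten; apply: eq_map => b; rewrite /splittings_lead [splittings k.+1 _]/= !map_allpairs.
  by apply: eq_allpairs => b' t' /=; rewrite -catA.
have lead_rot : [seq mask b y ++ t | b <- bitmasks (size y),
                    t <- map (rot 1) (splittings_lead k c (mask (map negb b) y))] =
  map (rot 1) (splittings_lead k.+1 c y).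
  rewrite [splittings_lead k.+1 c y]/splittings_lead map_allpairs; congr flatten.
  apply: eq_map => b; rewrite [splittings k.+1 _]/= /splittings_lead -map_comp !map_allpairs.
  by apply: eq_allpairs => b1 t1 /=; rewrite !rot1_cons !rcons_cat.
split.
  rewrite splittings_cons [splittings_mid k.+1 c y]/= perm_cat2l -lead_mid.
  apply: perm_trans (perm_allpairs_dep _ (perm_refl _) (fun b _ => (IH _).1)) _.
  by rewrite perm_allpairs_catr.
apply: perm_trans (perm_splittings_rcons k.+1 c y) _.
rewrite [splittings_mid k.+1 c y]/= -lead_rot.
apply: perm_trans (perm_cat (perm_refl _)
   (perm_allpairs_dep _ (perm_refl _) (fun b _ => (IH _).2))) _.
by rewrite perm_sym perm_catCA perm_cat2l perm_sym perm_allpairs_catr.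
Qed.

End Shuffles.

(** * The coproduct and the Adams operations *)

Lemma sum_binS (R : pzSemiRingType) j (f : nat -> R) :
  \sum_(l < j.+2) 'C(j.+1, l)%:R * f l =
  \sum_(l < j.+1) 'C(j, l)%:R * f l.+1 + \sum_(l < j.+1) 'C(j, l)%:R * f l.
Proof.
rewrite big_ord_recl [X in _ = _ + X]big_ord_recl !bin0 addrCA; congr (_ + _).
under eq_bigr do rewrite /bump /= binS natrD mulrDl.
rewrite big_split /= addrC; congr (_ + _).
by rewrite big_ord_recr /= bin_small // mul0r addr0.
Qed.

Section Series.
Variables (K : fieldType) (n : nat).
Local Notation word := (word n).
Local Notation ser := (ser K n).
Local Notation sh := (@shuffle_count n).

Definition ser_lquot (c : 'I_n) (a : ser) : ser := fun x => a (c :: x).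

Lemma ser_mul_nil (a b : ser) : ser_mul a b [::] = a [::] * b [::].
Proof. by rewrite /ser_mul big_ord1. Qed.

Lemma ser_mul_cons (a b : ser) c w :
  ser_mul a b (c :: w) = a [::] * b (c :: w) + ser_mul (ser_lquot c a) b w.
Proof. by rewrite /ser_mul /= big_ord_recl. Qed.

Lemma ser_mulDl (f g h : ser) w :
  ser_mul (fun x => f x + g x) h w = ser_mul f h w + ser_mul g h w.
Proof. by rewrite /ser_mul -big_split; apply: eq_bigr => i _; rewrite mulrDl. Qed.

Lemma ser_mulZl k (f h : ser) w :
  ser_mul (fun x => k * f x) h w = k * ser_mul f h w.
Proof. by rewrite /ser_mul mulr_sumr; apply: eq_bigr => i _; rewrite mulrA. Qed.

Lemma ser_mulZr k (f h : ser) w :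
  ser_mul h (fun x => k * f x) w = k * ser_mul h f w.
Proof. by rewrite /ser_mul mulr_sumr; apply: eq_bigr => i _; rewrite mulrCA. Qed.

Lemma ser_mul_suml (I : Type) (r : seq I) (F : I -> ser) h w :
  ser_mul (fun x => \sum_(i <- r) F i x) h w = \sum_(i <- r) ser_mul (F i) h w.
Proof. by rewrite /ser_mul exchange_big; apply: eq_bigr => m _; rewrite mulr_suml. Qed.

Lemma ser_mul_sumr (I : Type) (r : seq I) (F : I -> ser) h w :
  ser_mul h (fun x => \sum_(i <- r) F i x) w = \sum_(i <- r) ser_mul h (F i) w.
Proof. by rewrite /ser_mul exchange_big; apply: eq_bigr => m _; rewrite mulr_sumr. Qed.

Lemma ser_mul_ext (a a' b b' : ser) w :
  (forall x, (size x <= size w)%N -> a x = a' x /\ b x = b' x) ->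
  ser_mul a b w = ser_mul a' b' w.
Proof.
move=> h; apply: eq_bigr => i _.
have st : (size (take i w) <= size w)%N by rewrite size_take_min geq_minr.
have sd : (size (drop i w) <= size w)%N by rewrite size_drop leq_subr.
by rewrite (h _ st).1 (h _ sd).2.
Qed.

Lemma ser_lquot_mul c (a b : ser) :
  ser_lquot c (ser_mul a b) = (fun x => a [::] * ser_lquot c b x + ser_mul (ser_lquot c a) b x).
Proof. by apply: functional_extensionality => x; rewrite /ser_lquot ser_mul_cons. Qed.

Lemma ser_mulA (a b d : ser) w :
  ser_mul (ser_mul a b) d w = ser_mul a (ser_mul b d) w.
Proof.
elim: w a b d => [|c w IH] a b d; first by rewrite !ser_mul_nil mulrA.
rewrite !ser_mul_cons ser_lquot_mul ser_mulDl ser_mulZl IH ser_mul_nil.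
by rewrite mulrDr mulrA addrA.
Qed.

Lemma ser_mul1l (b : ser) w : ser_mul (@ser_one K n) b w = b w.
Proof.
rewrite /ser_mul big_ord_recl take0 drop0 /ser_one eqxx mul1r big1 ?addr0 // => i _.
by case: w i => [|c w] [i hi] //; rewrite /= mul0r.
Qed.

Lemma ser_powD (u : ser) l m w :
  ser_pow u (l + m) w = ser_mul (ser_pow u l) (ser_pow u m) w.
Proof.
elim: l w => [|l IH] w /=; first by rewrite ser_mul1l.
by rewrite ser_mulA; congr ser_mul; apply: functional_extensionality.
Qed.

Lemma ser_pow_eq0 (u : ser) j w : u [::] = 0 -> (size w < j)%N -> ser_pow u j w = 0.
Proof.
move=> u0; elim: j w => [|j IH] w //= hw; rewrite /ser_mul big1 // => i _.
have [->|i0] := posnP i; first by rewrite take0 u0 mul0r.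
by rewrite IH ?mulr0 // size_drop; have := ltn_ord i; lia.
Qed.

Definition ser_word (v : word) : ser := fun w => (w == v)%:R.

Lemma ser_mul_word x y w : ser_mul (ser_word x) (ser_word y) w = ser_word (x ++ y) w.
Proof.
rewrite /ser_mul /ser_word eq_sym eq_cat_sum natr_sum.
by apply: eq_bigr => i _; rewrite natrM !(eq_sym (take _ _)) !(eq_sym (drop _ _)).
Qed.

Lemma coprodE (z : ser) p a :
  coprod z p a = \sum_(x <- words n (size p + size a)) z x * (sh p a x)%:R.
Proof. exact: sum_tuples_words. Qed.

Lemma sum_words_shuffle (z : ser) m p a :
  \sum_(x <- words n m) z x * (sh p a x)%:R =
  if m == (size p + size a)%N then coprod z p a else 0.
Proof.
rewrite coprodE; case: eqP => [-> //|hm]; rewrite big_seq big1 // => x.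
rewrite mem_words => /eqP sx; case: (sh p a x =P 0%N) => [->|/eqP]; first by rewrite mulr0.
by move/shuffle_count_size; rewrite sx.
Qed.

Lemma coprod_nil_l (z : ser) a : coprod z [::] a = z a.
Proof.
rewrite coprodE (eq_bigr (fun x => z x * (x == a)%:R)) ?sum_words_delta ?eqxx //.
by move=> x _; rewrite shuffle_count_nil_l eq_sym.
Qed.

Lemma coprod_mul (y z : ser) p a :
  coprod (ser_mul y z) p a =
  \sum_(i < (size p).+1) \sum_(j < (size a).+1)
     coprod y (take i p) (take j a) * coprod z (drop i p) (drop j a).
Proof.
rewrite coprodE; set L := (size p + size a)%N.
pose F x1 x2 := y x1 * z x2 * (sh p a (x1 ++ x2))%:R.
transitivity (\sum_(m < L.+1) \sum_(x1 <- words n m) \sum_(x2 <- words n (L - m)) F x1 x2).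
  rewrite (eq_big_seq (fun x => \sum_(m < L.+1) F (take m x) (drop m x))); last first.
    move=> x; rewrite mem_words => /eqP sx; rewrite /ser_mul sx big_distrl /=.
    by apply: eq_bigr => m _; rewrite /F cat_take_drop.
  by rewrite exchange_big; apply: eq_bigr => m _; rewrite sum_words_split ?leq_ord.
pose s1 i j := sh (take i p) (take j a); pose s2 i j := sh (drop i p) (drop j a).
transitivity (\sum_(m < L.+1) \sum_(i < (size p).+1) \sum_(j < (size a).+1)
  (\sum_(x1 <- words n m) y x1 * (s1 i j x1)%:R) *
  (\sum_(x2 <- words n (L - m)) z x2 * (s2 i j x2)%:R)).
  apply: eq_bigr => m _; symmetry.
  under eq_bigr do under eq_bigr do rewrite big_distrlr /=.
  under eq_bigr do rewrite exchange_big; rewrite exchange_big; apply: eq_bigr => x1 _.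
  under eq_bigr do rewrite exchange_big; rewrite exchange_big; apply: eq_bigr => x2 _.
  rewrite /F shuffle_count_cat natr_sum mulr_sumr; apply: eq_bigr => i _.
  rewrite natr_sum mulr_sumr; apply: eq_bigr => j _.
  by rewrite natrM mulrACA.
rewrite exchange_big; apply: eq_bigr => i _; rewrite exchange_big; apply: eq_bigr => j _ /=.
have ip := leq_ord i; have ja := leq_ord j.
have ijL : (i + j < L.+1)%N by rewrite ltnS leq_add.
rewrite (bigD1 (Ordinal ijL)) //= [X in _ + X]big1 ?addr0 => [|m mij]; rewrite /s1 /s2 !sum_words_shuffle.
  by rewrite !size_takel // !size_drop !eqxx ifT //; apply/eqP; lia.
by rewrite !size_takel // ifN ?mul0r.
Qed.

Lemma primitive_nil (u : ser) : primitive u -> u [::] = 0.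
Proof.
move=> hu; have := hu [::] [::]; rewrite coprod_nil_l /=.
by rewrite -{1}(addr0 (u [::])) => /addrI <-.
Qed.

Lemma coprod_mul_primitive (u y : ser) p a : primitive u ->
  coprod (ser_mul u y) p a =
  \sum_(i < (size p).+1) u (take i p) * coprod y (drop i p) a +
  \sum_(j < (size a).+1) u (take j a) * coprod y p (drop j a).
Proof.
move=> hu; rewrite coprod_mul.
under eq_bigr do under eq_bigr do rewrite hu mulrDl.
under eq_bigr do rewrite big_split /=.
rewrite big_split /= [X in _ + X]exchange_big /=; congr (_ + _); apply: eq_bigr => i _;
  rewrite big_ord_recl /= take0 drop0 eqxx big1 ?addr0 // => j _;
  by rewrite take_bump0_eq_nil mul0r.
Qed.

Lemma coprod_one p a : coprod (@ser_one K n) p a = @ser_one K n p * @ser_one K n a.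
Proof.
rewrite coprodE /ser_one (eq_bigr (fun x => (sh p a x)%:R * (x == [::])%:R)); last first.
  by move=> x _; rewrite mulrC; case: (x == [::]).
rewrite sum_words_delta /=.
by case: p => [|d p]; case: a => [|e a]; rewrite ?mulr1 ?mulr0 ?mul0r.
Qed.

Lemma coprod_pow_primitive (u : ser) j p a : primitive u ->
  coprod (ser_pow u j) p a =
  \sum_(l < j.+1) 'C(j, l)%:R * (ser_pow u l p * ser_pow u (j - l) a).
Proof.
move=> hu; elim: j p a => [|j IH] p a; first by rewrite big_ord1 coprod_one mul1r.
rewrite [ser_pow u j.+1]/= coprod_mul_primitive //.
rewrite (sum_binS _ (fun l => ser_pow u l p * ser_pow u (j.+1 - l) a)); congr (_ + _).
  under eq_bigr do rewrite IH mulr_sumr.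
  rewrite exchange_big; apply: eq_bigr => l _ /=.
  rewrite subSS /ser_mul !mulr_suml mulr_sumr.
  by apply: eq_bigr => i _; rewrite mulrCA; congr (_ * _); rewrite mulrA.
under eq_bigr do rewrite IH mulr_sumr.
rewrite exchange_big; apply: eq_bigr => l _ /=.
rewrite (subSn (leq_ord l)) [ser_pow u (j - l).+1]/= /ser_mul !mulr_sumr.
by apply: eq_bigr => i _; rewrite mulrCA; congr (_ * _); rewrite mulrCA.
Qed.

Definition adams k (z : ser) : ser :=
  fun w => \sum_(x <- words n (size w)) z x * (adams_coef k x w)%:R.

Lemma adamsS k (z : ser) w :
  adams k.+1 z w = \sum_(i < (size w).+1) adams k (coprod z (take i w)) (drop i w).
Proof.
rewrite /adams (eq_big_seq (fun x => \sum_(i < (size w).+1) \sum_(a <- words n (size w - i))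
   z x * ((sh (take i w) a x)%:R * (adams_coef k a (drop i w))%:R))); last first.
  move=> x /[!mem_words] /eqP sx; rewrite adams_coefS mulr_sumr sx.
  by apply: eq_bigr => i _; rewrite mulr_sumr.
rewrite exchange_big; apply: eq_bigr => i _ /=.
rewrite exchange_big size_drop; apply: eq_big_seq => a /[!mem_words] /eqP sa.
have := sum_words_shuffle z (size w) (take i w) a.
rewrite size_takel ?leq_ord // sa subnKC ?leq_ord // eqxx => <-.
by rewrite big_distrl; apply: eq_bigr => x _; rewrite mulrA.
Qed.

Lemma adams_sum k (I : Type) (r : seq I) (F : I -> ser) w :
  adams k (fun a => \sum_(l <- r) F l a) w = \sum_(l <- r) adams k (F l) w.
Proof.
by rewrite /adams exchange_big; apply: eq_bigr => x _; rewrite mulr_suml.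
Qed.

Lemma adamsZ k c (f : ser) w : adams k (fun a => c * f a) w = c * adams k f w.
Proof. by rewrite /adams mulr_sumr; apply: eq_bigr => x _; rewrite mulrA. Qed.

Lemma adamsB k (f g : ser) w : adams k (fun a => f a - g a) w = adams k f w - adams k g w.
Proof. by rewrite /adams -sumrB; apply: eq_bigr => x _; rewrite mulrBl. Qed.

Lemma adams0 (y : ser) w : adams 0 y w = (w == [::])%:R * y [::].
Proof.
rewrite /adams (eq_bigr (fun x => ((w == [::])%:R * y x) * (x == [::])%:R)).
  by rewrite sum_words_delta /=; case: w => [|d w] /=; rewrite ?mul0r.
move=> x _; rewrite /adams_coef; case: x => [|c x] /=; last by rewrite !mulr0.
by rewrite mulr1 addn0 mulrC eq_sym.
Qed.

Lemma adams_pow_primitive (u : ser) k j w : primitive u ->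
  adams k (ser_pow u j) w = k%:R ^+ j * ser_pow u j w.
Proof.
move=> hu; elim: k j w => [|k IH] j w.
  rewrite adams0; case: j => [|j]; first by rewrite expr0 mul1r /= /ser_one eqxx mulr1; case: w.
  by rewrite ser_pow_eq0 ?(primitive_nil hu) // mulr0 expr0n mul0r.
have coprod_pow p : coprod (ser_pow u j) p =
    (fun a => \sum_(l < j.+1) ('C(j, l)%:R * ser_pow u l p) * ser_pow u (j - l) a).
  apply: functional_extensionality => a; rewrite coprod_pow_primitive //.
  by apply: eq_bigr => l _; rewrite mulrA.
rewrite adamsS; under eq_bigr do rewrite coprod_pow adams_sum.
under eq_bigr do under eq_bigr do rewrite adamsZ IH.
rewrite exchange_big -natr1 exprDn mulr_suml /=; apply: eq_bigr => l _.
have -> : ser_pow u j w = ser_pow u (l + (j - l)) w by rewrite subnKC ?leq_ord.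
rewrite ser_powD /ser_mul mulr_sumr expr1n mulr1.
by apply: eq_bigr => i _; rewrite -mulr_natl; ring.
Qed.

Lemma adams_exp_primitive (u : ser) k w : primitive u ->
  adams k (ser_exp u) w =
  \sum_(j < (size w).+1) (j`!%:R)^-1 * (k%:R ^+ j * ser_pow u j w).
Proof.
move=> hu; rewrite /adams /ser_exp (eq_big_seq (fun x => \sum_(j < (size w).+1)
    (j`!%:R)^-1 * (ser_pow u j x * (adams_coef k x w)%:R))); last first.
  move=> x /[!mem_words] /eqP ->; rewrite mulr_suml.
  by apply: eq_bigr => j _; rewrite mulrA.
rewrite exchange_big; apply: eq_bigr => j _ /=.
by rewrite -mulr_sumr -(adams_pow_primitive k j w hu).
Qed.

(** * The closure of the commutator span *)

(* For x = c :: y, rot_diff x is the commutator of the letter c and the word y. *)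
Definition rot_diff (x : word) : ser := fun w => ser_word x w - ser_word (rot 1 x) w.

Definition rot_span (z : ser) : Prop :=
  exists s : seq (K * word), forall w, z w = \sum_(p <- s) p.1 * rot_diff p.2 w.

Lemma eq_rot_span f g : f =1 g -> rot_span f -> rot_span g.
Proof. by move=> h [s hs]; exists s => w; rewrite -h. Qed.

Lemma rot_span0 : rot_span (fun _ => 0).
Proof. by exists [::] => w; rewrite big_nil. Qed.

Lemma rot_spanD f g : rot_span f -> rot_span g -> rot_span (fun w => f w + g w).
Proof. by move=> [s hs] [t ht]; exists (s ++ t) => w; rewrite big_cat hs ht. Qed.

Lemma rot_spanZ c f : rot_span f -> rot_span (fun w => c * f w).
Proof.
move=> [s hs]; exists [seq (c * p.1, p.2) | p <- s] => w.
by rewrite big_map hs mulr_sumr; apply: eq_bigr => p _; rewrite mulrA.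
Qed.

Lemma rot_span_sum (I : Type) (r : seq I) (F : I -> ser) :
  (forall i, rot_span (F i)) -> rot_span (fun w => \sum_(i <- r) F i w).
Proof.
move=> h; elim: r => [|i r IH]; first by apply: eq_rot_span rot_span0 => w; rewrite big_nil.
by apply: eq_rot_span (rot_spanD (h i) IH) => w; rewrite big_cons.
Qed.

Lemma rot_span_rot_diff x : rot_span (rot_diff x).
Proof. by exists [:: (1, x)] => w; rewrite big_seq1 mul1r. Qed.

Lemma rot_span_rot (v : word) r : (r <= size v)%N ->
  rot_span (fun w => ser_word v w - ser_word (rot r v) w).
Proof.
elim: r => [|r IH] h; first by apply: eq_rot_span rot_span0 => w; rewrite rot0 subrr.
apply: eq_rot_span (rot_spanD (IH (ltnW h)) (rot_span_rot_diff (rot r v))) => w.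
by rewrite /rot_diff (rotS h) addrA subrK.
Qed.

Lemma comm_span_rot_span g : rot_span g -> comm_span g.
Proof.
move=> [s hs].
exists [seq (fun w => p.1 * ser_word (take 1 p.2) w, ser_word (drop 1 p.2)) | p <- s].
apply: functional_extensionality => w; rewrite hs big_map; apply: eq_bigr => p _ /=.
by rewrite ser_mulZl ser_mulZr !ser_mul_word cat_take_drop -mulrBr.
Qed.

Lemma adams_ser_word k x w : adams k (ser_word x) w = (adams_coef k x w)%:R.
Proof.
rewrite /adams (eq_bigr (fun v => (adams_coef k v w)%:R * (v == x)%:R)) ?sum_words_delta.
  by case: eqP => // /eqP sxw; rewrite adams_coef_eq0.
by move=> v _; rewrite mulrC.
Qed.

Lemma rot_span_adams_rot_diff k x : rot_span (adams k (rot_diff x)).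
Proof.
apply: (eq_rot_span (f := fun w => (adams_coef k x w)%:R - (adams_coef k (rot 1 x) w)%:R)).
  by move=> w; rewrite adamsB !adams_ser_word.
case: x => [|c y]; first by apply: eq_rot_span rot_span0 => w; rewrite subrr.
rewrite rot1_cons; case: k => [|k].
  by apply: eq_rot_span rot_span0 => w; rewrite /adams_coef; case: y => [|d y]; rewrite subrr.
have [perm_cons perm_rcons] := perm_splittings_cons_rcons k c y.
exists [seq (1, q) | q <- splittings_lead k c y] => w.
rewrite /adams_coef (permP perm_cons) (permP perm_rcons) !count_cat !natrD opprD addrACA.
by rewrite subrr addr0 count_mem_sub_map big_map; apply: eq_bigr => q _; rewrite mul1r.
Qed.

Lemma rot_span_adams k g : rot_span g -> rot_span (adams k g).
Proof.
move=> [s hs].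
have -> : g = (fun a => \sum_(p <- s) p.1 * rot_diff p.2 a) by apply: functional_extensionality.
apply: (eq_rot_span (f := fun w => \sum_(p <- s) p.1 * adams k (rot_diff p.2) w)).
  by move=> w; rewrite adams_sum; apply: eq_bigr => p _; rewrite adamsZ.
by apply: rot_span_sum => p; apply: rot_spanZ; exact: rot_span_adams_rot_diff.
Qed.

Definition rot_span_upto N (z : ser) : Prop :=
  exists2 g, rot_span g & forall w, (size w < N)%N -> z w = g w.

Lemma eq_rot_span_upto N (z z' : ser) :
  (forall w, (size w < N)%N -> z w = z' w) -> rot_span_upto N z -> rot_span_upto N z'.
Proof. by move=> h [g hg hz]; exists g => // w hw; rewrite -h // hz. Qed.

Lemma rot_span_upto_sum N (I : Type) (r : seq I) (F : I -> ser) :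
  (forall i, rot_span_upto N (F i)) -> rot_span_upto N (fun w => \sum_(i <- r) F i w).
Proof.
move=> h; elim: r => [|i r [g hg hgE]].
  by exists (fun _ => 0); [exact: rot_span0 | move=> w _; rewrite big_nil].
have [f hf hfE] := h i; exists (fun w => f w + g w); first exact: rot_spanD.
by move=> w hw; rewrite big_cons hfE ?hgE.
Qed.

Lemma rot_span_uptoZ N c (z : ser) : rot_span_upto N z -> rot_span_upto N (fun w => c * z w).
Proof. by move=> [g hg hz]; exists (fun w => c * g w) => [|w hw]; rewrite ?hz //; exact: rot_spanZ. Qed.

Lemma rot_span_upto_adams N k (z : ser) : rot_span_upto N z -> rot_span_upto N (adams k z).
Proof.
move=> [g hg hz]; exists (adams k g) => [|w hw]; first exact: rot_span_adams.
by apply: eq_big_seq => x /[!mem_words] /eqP sx; rewrite hz // sx.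
Qed.

Lemma rot_span_upto_commutator N (a b : ser) :
  rot_span_upto N (fun w => ser_mul a b w - ser_mul b a w).
Proof.
(* Below length N, a and b may be replaced by finite sums of words, and
   x ++ y - y ++ x = v - rot (size x) v for v = x ++ y. *)
pose trunc (f : ser) w := \sum_(x <- words_below n N) f x * ser_word x w.
have truncE f x : (size x < N)%N -> trunc f x = f x.
  by move=> xN; rewrite /trunc; under eq_bigr do rewrite /ser_word eq_sym; exact: sum_words_below_delta.
have mul_trunc f h w : ser_mul (trunc f) (trunc h) w =
    \sum_(x <- words_below n N) \sum_(y <- words_below n N) f x * h y * ser_word (x ++ y) w.
  rewrite ser_mul_suml; apply: eq_bigr => x _; rewrite ser_mulZl ser_mul_sumr mulr_sumr.
  by apply: eq_bigr => y _; rewrite ser_mulZr ser_mul_word mulrA.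
exists (fun w => \sum_(x <- words_below n N) \sum_(y <- words_below n N)
    a x * b y * (ser_word (x ++ y) w - ser_word (y ++ x) w)).
  apply: rot_span_sum => x; apply: rot_span_sum => y; apply: rot_spanZ.
  have xy : (size x <= size (x ++ y))%N by rewrite size_cat leq_addr.
  by apply: eq_rot_span (rot_span_rot xy) => w; rewrite rot_size_cat.
move=> w hw; have trunc_agree f h : ser_mul f h w = ser_mul (trunc f) (trunc h) w.
  by apply: ser_mul_ext => x xw; rewrite !truncE //; exact: leq_ltn_trans hw.
rewrite (trunc_agree a b) (trunc_agree b a) !mul_trunc [X in _ - X]exchange_big -sumrB.
apply: eq_bigr => x _; rewrite -sumrB; apply: eq_bigr => y _.
by rewrite mulrBr [b y * _]mulrC.
Qed.

Lemma in_closure_comm_spanP (z : ser) :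
  in_closure (@comm_span K n) z <-> forall N, rot_span_upto N z.
Proof.
split=> [hz N | hz N].
  have [_ [[s ->] hsE]] := hz N.
  apply: eq_rot_span_upto (rot_span_upto_sum s _) => [w /hsE -> //|p].
  exact: rot_span_upto_commutator.
have [g hg hgE] := hz N; exists g; split=> //; exact: comm_span_rot_span.
Qed.

End Series.

(** * Extracting the powers *)

Lemma vandermonde_nat_solvable (K : fieldType) (hK : [pchar K] =i pred0) N (t : nat -> K) :
  exists c : 'I_N -> K, forall j, (j < N)%N -> \sum_(k < N) c k * k%:R ^+ j = t j.
Proof.
pose V := Vandermonde N (\row_(k < N) (k%:R : K)).
have V_unit : V \in unitmx.
  rewrite unitmxE unitfE det_Vandermonde; apply/prodf_neq0 => i _.
  apply/prodf_neq0 => j ij; rewrite !mxE -natrB ?(ltnW ij) //.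
  by rewrite ((pcharf0P K).1 hK) subn_eq0 -ltnNge.
exists (fun k => (invmx V *m \col_(j < N) t j) k 0) => j jN.
have /matrixP /(_ (Ordinal jN) 0) := mulKVmx V_unit (\col_(j < N) t j).
rewrite !mxE => <-; apply: eq_bigr => k _; by rewrite !mxE mulrC.
Qed.

Lemma sum_adams_exp_primitive (K : fieldType) (hK : [pchar K] =i pred0) n (u : ser K n)
    N m (c : 'I_N -> K) w :
  primitive u ->
  (forall j, (j < N)%N -> \sum_(k < N) c k * k%:R ^+ j = (j == m)%:R * j`!%:R) ->
  (size w < N)%N ->
  \sum_(k < N) c k * adams k (ser_exp u) w = ser_pow u m w.
Proof.
move=> hu hc wN; under eq_bigr do rewrite adams_exp_primitive // mulr_sumr.
rewrite exchange_big /=.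
transitivity (\sum_(j < (size w).+1) (j == m :> nat)%:R * ser_pow u j w).
  apply: eq_bigr => j _.
  rewrite (eq_bigr (fun k => (j`!%:R)^-1 * ser_pow u j w * (c k * k%:R ^+ j))); last first.
    by move=> k _; ring.
  have fact_neq0 : j`!%:R != 0 :> K by rewrite ((pcharf0P K).1 hK) -lt0n fact_gt0.
  by rewrite -mulr_sumr hc ?(leq_ltn_trans (leq_ord j) wN) //; field.
under eq_bigr do rewrite mulr_natl mulrb.
rewrite -big_mkcond (big_ord1_eq _ (fun j => ser_pow u j w)); case: ltnP => // /ser_pow_eq0 -> //.
exact: primitive_nil.
Qed.

Theorem theorem3p2 (K : fieldType) (hK : [pchar K] =i pred0) (n : nat)
    (u v : ser K n) :
  primitive u -> primitive v ->
  cyc_eq (ser_exp u) (ser_exp v) ->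
  forall m : nat, cyc_eq (ser_pow u m) (ser_pow v m).
Proof.
move=> hu hv /in_closure_comm_spanP hE m; apply/in_closure_comm_spanP => N.
have [c hc] := vandermonde_nat_solvable hK N (fun j => (j == m)%:R * j`!%:R).
pose E := ser_sub (ser_exp u) (ser_exp v).
apply: (eq_rot_span_upto (z := fun w => \sum_(k < N) c k * adams k E w)).
  move=> w wN; rewrite /E /ser_sub; under eq_bigr do rewrite adamsB mulrBr.
  by rewrite sumrB (sum_adams_exp_primitive hK hu hc wN) (sum_adams_exp_primitive hK hv hc wN).
by apply: rot_span_upto_sum => k; apply: rot_span_uptoZ; exact: rot_span_upto_adams.
Qed.
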